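(* Let $\mathcal C=\mathcal C(I,A,(\rho_i)_{i\in I},(C^a)_{a\in A})$ be a connected Cartan scheme and $\mathcal R=\mathcal R(\mathcal C,(R^a)_{a\in A})$ a root system of type $\mathcal C$. Let $a\in A$ and $i,j\in I$ with $i\neq j$. The following are equivalent: (1) $c^a_{ij}=c^a_{ji}=0$; (2) $R^a\cap(\mathbb N_0\alpha_i+\mathbb N_0\alpha_j)=\{\alpha_i,\alpha_j\}$; (3) $m^a_{i,j}=2$.
   Context: Let $I$ be a nonempty finite set and $\{\alpha_i\mid i\in I\}$ the standard basis of $\mathbb Z^I$; $\mathbb N_0=\{0,1,2,\dots\}$. A generalized Cartan matrix is $C=(c_{ij})_{i,j\in I}\in\mathbb Z^{I\times I}$ with $c_{ii}=2$, $c_{jk}\le0$ for $j\ne k$, and $c_{ij}=0\Rightarrow c_{ji}=0$. A Cartan scheme $\mathcal C=\mathcal C(I,A,(\rho_i)_{i\in I},(C^a)_{a\in A})$ consists of a nonempty set $A$, maps $\rho_i:A\to A$ and generalized Cartan matrices $C^a=(c^a_{jk})_{j,k\in I}$ such that (C1) $\rho_i^2=\mathrm{id}$ and (C2) $c^a_{ij}=c^{\rho_i(a)}_{ij}$ for all $a\in A$, $i,j\in I$. It is connected if the group generated by the $\rho_i$ acts transitively on $A$. For $i\in I$, $a\in A$ let $\sigma_i^a\in\mathrm{Aut}(\mathbb Z^I)$, $\sigma_i^a(\alpha_j)=\alpha_j-c^a_{ij}\alpha_i$. A root system of type $\mathcal C$ is a family $\mathcal R=\mathcal R(\mathcal C,(R^a)_{a\in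 A})$ of subsets $R^a\subset\mathbb Z^I$ such that, writing $R^a_+=R^a\cap\mathbb N_0^I$ and $m^a_{i,j}=|R^a\cap(\mathbb N_0\alpha_i+\mathbb N_0\alpha_j)|$, for all $a\in A$, $i,j\in I$: (R1) $R^a=R^a_+\cup(-R^a_+)$; (R2) $R^a\cap\mathbb Z\alpha_i=\{\alpha_i,-\alpha_i\}$; (R3) $\sigma_i^a(R^a)=R^{\rho_i(a)}$; (R4) if $i\neq j$ and $m^a_{i,j}$ is finite then $(\rho_i\rho_j)^{m^a_{i,j}}(a)=a$. *)

From mathcomp Require Import all_boot all_order all_algebra.
Set Implicit Arguments. Unset Strict Implicit. Unset Printing Implicit Defensive.
Import Order.TTheory GRing.Theory Num.Theory.
Local Open Scope ring_scope.

Definition vecZ (I : finType) := {ffun I -> int}.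

Definition alpha (I : finType) (i : I) : vecZ I := [ffun k => ((k == i) : nat)%:Z].

Definition is_gcm (I : finType) (C : I -> I -> int) : Prop :=
  (forall i, C i i = 2) /\
  (forall j k, j != k -> C j k <= 0) /\
  (forall i j, C i j = 0 -> C j i = 0).

Definition cartan_scheme (I : finType) (A : Type) (rho : I -> A -> A)
  (C : A -> I -> I -> int) : Prop :=
  (exists a : A, True) /\
  (forall a, is_gcm (C a)) /\
  (forall i a, rho i (rho i a) = a) /\
  (forall a i j, C a i j = C (rho i a) i j).

Definition rho_word (I : finType) (A : Type) (rho : I -> A -> A) (w : seq I) (a : A) : A :=
  foldr (fun i x => rho i x) a w.

(* connected: the group generated by the rho_i (involutions) acts transitively *)
Definition connected_scheme (I : finType) (A : Type) (rho : I -> A -> A) : Prop :=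
  forall a b : A, exists w : seq I, rho_word rho w a = b.

(* sigma_i^a (v) = v - (sum_j c^a_ij v_j) alpha_i, i.e. sigma(alpha_j) = alpha_j - c_ij alpha_i *)
Definition sigma (I : finType) (A : Type) (C : A -> I -> I -> int) (i : I) (a : A)
  (v : vecZ I) : vecZ I :=
  [ffun k => v k - (\sum_(j : I) C a i j * v j) * alpha i k].

Definition nonneg (I : finType) (v : vecZ I) : Prop := forall k, 0 <= v k.

Definition negv (I : finType) (v : vecZ I) : vecZ I := [ffun k => - v k].

Definition in_cone (I : finType) (i j : I) (v : vecZ I) : Prop :=
  exists p q : nat, v = [ffun k => p%:Z * alpha i k + q%:Z * alpha j k].

(* m^a_{i,j} is finite and equals m *)
Definition m_is (I : finType) (A : Type) (R : A -> vecZ I -> Prop) (a : A) (i j : I)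
  (m : nat) : Prop :=
  exists s : seq (vecZ I), uniq s /\ (forall v, v \in s <-> (R a v /\ in_cone i j v))
                         /\ size s = m.

Definition root_system (I : finType) (A : Type) (rho : I -> A -> A)
  (C : A -> I -> I -> int) (R : A -> vecZ I -> Prop) : Prop :=
  (forall a v, R a v <-> ((R a v /\ nonneg v) \/ (R a (negv v) /\ nonneg (negv v)))) /\
  (forall a i (z : int), R a [ffun k => z * alpha i k] <-> (z = 1 \/ z = -1)) /\
  (forall a i v, R (rho i a) v <-> exists w, R a w /\ sigma C i a w = v) /\
  (forall a i j (m : nat), i != j -> m_is R a i j m ->
     rho_word rho (flatten (nseq m [:: i; j])) a = a).

(** Reflecting a root [p alpha_i + q alpha_j] of the cone at [a] by
    [sigma_i] gives [(-p - q c_ij) alpha_i + q alpha_j], again a root.  If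
    [c_ij = 0] this root has coefficients of opposite signs unless [p = 0] or
    [q = 0], so the only roots in the cone are [alpha_i] and [alpha_j].
    Conversely [sigma_i] maps the root [alpha_j] at [rho_i a] to the root
    [-c_ij alpha_i + alpha_j] of the cone at [a]; if the cone holds only
    [alpha_i] and [alpha_j], then [c_ij = 0], hence [c_ji = 0]. *)

From mathcomp Require Import all_boot all_order all_algebra zify.
Import Order.TTheory GRing.Theory Num.Theory.
Set Implicit Arguments. Unset Strict Implicit. Unset Printing Implicit Defensive.
Local Open Scope ring_scope.

Section RankTwoCone.

Variable I : finType.

Definition pair_vec (i j : I) (p q : int) : vecZ I :=
  [ffun k => p * alpha i k + q * alpha j k].

Lemma alpha_diag (i : I) : alpha i i = 1.
Proof. by rewrite ffunE eqxx. Qed.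

Lemma alpha_offdiag (i k : I) : k != i -> alpha i k = 0.
Proof. by move=> ki; rewrite ffunE (negbTE ki). Qed.

Lemma alpha_eq (i j : I) : (alpha i == alpha j) = (i == j).
Proof.
apply/eqP/eqP => [/ffunP/(_ i)|-> //].
by rewrite alpha_diag ffunE; case: eqP.
Qed.

Lemma negvE (v : vecZ I) (k : I) : negv v k = - v k.
Proof. by rewrite ffunE. Qed.

Lemma sum_mul_alpha (i : I) (F : I -> int) : \sum_l F l * alpha i l = F i.
Proof.
rewrite (bigD1 i) //= alpha_diag mulr1 big1 ?addr0 // => l li.
by rewrite alpha_offdiag // mulr0.
Qed.

Lemma pair_vecEl (i j : I) (p q : int) : i != j -> pair_vec i j p q i = p.
Proof. by move=> ij; rewrite ffunE alpha_diag alpha_offdiag // mulr0 addr0 mulr1. Qed.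

Lemma pair_vecEr (i j : I) (p q : int) : i != j -> pair_vec i j p q j = q.
Proof.
by move=> ij; rewrite ffunE alpha_diag alpha_offdiag 1?eq_sym // mulr0 add0r mulr1.
Qed.

Lemma pair_vec0l (i j : I) (q : int) : pair_vec i j 0 q = [ffun k => q * alpha j k].
Proof. by apply/ffunP => k; rewrite !ffunE mul0r add0r. Qed.

Lemma pair_vec0r (i j : I) (p : int) : pair_vec i j p 0 = [ffun k => p * alpha i k].
Proof. by apply/ffunP => k; rewrite !ffunE mul0r addr0. Qed.

Lemma pair_vec_alphal (i j : I) : pair_vec i j 1 0 = alpha i.
Proof. by apply/ffunP => k; rewrite ffunE mul1r mul0r addr0. Qed.

Lemma pair_vec_alphar (i j : I) : pair_vec i j 0 1 = alpha j.
Proof. by apply/ffunP => k; rewrite ffunE mul1r mul0r add0r. Qed.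

Lemma sigma_pair_vec (A : Type) (C : A -> I -> I -> int) (a : A) (i j : I)
    (p q : int) :
  C a i i = 2 -> sigma C i a (pair_vec i j p q) = pair_vec i j (- p - q * C a i j) q.
Proof.
move=> cii; apply/ffunP => k; rewrite !ffunE.
have -> : \sum_l C a i l * pair_vec i j p q l = 2 * p + q * C a i j.
  under eq_bigr => l _ do rewrite ffunE mulrDr !mulrA.
  by rewrite big_split /= !sum_mul_alpha cii [C a i j * q]mulrC.
lia.
Qed.

Lemma mem_size2 (T : eqType) (s : seq T) (x y v : T) :
  size s = 2%N -> x != y -> x \in s -> y \in s -> v \in s -> v = x \/ v = y.
Proof.
case: s => [|x1 [|x2 [|? ?]]] //= _; rewrite !inE.
move=> xy /orP[]/eqP ex /orP[]/eqP ey /orP[]/eqP ->; subst x y;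
  by [left | right | rewrite eqxx in xy].
Qed.

Variables (A : Type) (rho : I -> A -> A) (C : A -> I -> I -> int)
  (R : A -> vecZ I -> Prop).
Hypotheses (hC : cartan_scheme rho C) (hR : root_system rho C R).

Lemma cartan_diag (a : A) (i : I) : C a i i = 2.
Proof. by case: hC => _ [/(_ a) [] + _ _]. Qed.

Lemma cartan_offdiag_le0 (a : A) (i j : I) : i != j -> C a i j <= 0.
Proof. by case: hC => _ [/(_ a) [_ [+ _]] _]; apply. Qed.

Lemma cartan_zero_sym (a : A) (i j : I) : C a i j = 0 -> C a j i = 0.
Proof. by case: hC => _ [/(_ a) [_ [_ +]] _]; apply. Qed.

Lemma root_sign (b : A) (v : vecZ I) : R b v -> nonneg v \/ nonneg (negv v).
Proof. by case: hR => + _ => /(_ b v) [+ _] Rv => /(_ Rv) [[]|[]]; auto. Qed.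

Lemma root_multiple_alpha (b : A) (i : I) (z : int) :
  R b [ffun k => z * alpha i k] -> z = 1 \/ z = -1.
Proof. by case: hR => _ [/(_ b i z) [+ _] _]. Qed.

Lemma root_alpha (b : A) (i : I) : R b (alpha i).
Proof.
case: hR => _ [/(_ b i 1) [_ R2] _].
suff -> : alpha i = [ffun k => 1 * alpha i k] by apply: R2; left.
by apply/ffunP => k; rewrite [in RHS]ffunE mul1r.
Qed.

Lemma root_sigma (b : A) (i : I) (v : vecZ I) : R b v -> R (rho i b) (sigma C i b v).
Proof. by case: hR => _ [_ [R3 _]] Rv; apply/R3; exists v. Qed.

Lemma root_reflect_alpha (a : A) (i j : I) : R a (pair_vec i j (- C a i j) 1).
Proof.
case: hC => _ [_ [rho_inv C_rho]].
have := root_sigma i (root_alpha (rho i a) j).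
rewrite rho_inv -(pair_vec_alphar i) sigma_pair_vec ?cartan_diag // -C_rho.
by rewrite oppr0 sub0r mul1r.
Qed.

Lemma root_pair_vec_sign (b : A) (i j : I) (p q : int) :
  i != j -> R b (pair_vec i j p q) -> (0 <= p /\ 0 <= q) \/ (p <= 0 /\ q <= 0).
Proof.
move=> ij /root_sign [] nn; [left|right]; move: (nn i) (nn j).
  by rewrite pair_vecEl // pair_vecEr.
by rewrite !negvE pair_vecEl // pair_vecEr // !oppr_ge0.
Qed.

Variables (a : A) (i j : I).
Hypothesis ij : i != j.

Lemma in_cone_alphal : in_cone i j (alpha i).
Proof. by exists 1%N, 0%N; rewrite [LHS](esym (pair_vec_alphal i j)). Qed.

Lemma in_cone_alphar : in_cone i j (alpha j).
Proof. by exists 0%N, 1%N; rewrite [LHS](esym (pair_vec_alphar i j)). Qed.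

Lemma alpha_cone_roots (v : vecZ I) :
  v = alpha i \/ v = alpha j -> R a v /\ in_cone i j v.
Proof.
by case=> ->; split; by [exact: root_alpha | exact: in_cone_alphal | exact: in_cone_alphar].
Qed.

Lemma orthogonal_cone_roots (v : vecZ I) :
  C a i j = 0 -> R a v /\ in_cone i j v <-> v = alpha i \/ v = alpha j.
Proof.
move=> cij; split=> [[Rv [p [q vE]]]|]; last exact: alpha_cone_roots.
change (v = pair_vec i j p q) in vE.
have := root_sigma i Rv; rewrite vE sigma_pair_vec ?cartan_diag // cij mulr0 subr0.
move=> /(root_pair_vec_sign ij) sign.
have [p0|q0] : p = 0%N \/ q = 0%N by lia.
- right; move: Rv; rewrite vE p0 pair_vec0l => /root_multiple_alpha [q1|]; last lia.
  by rewrite q1 -(pair_vec0l i) pair_vec_alphar.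
- left; move: Rv; rewrite vE q0 pair_vec0r => /root_multiple_alpha [p1|]; last lia.
  by rewrite p1 -(pair_vec0r _ j) pair_vec_alphal.
Qed.

Lemma cone_roots_alpha_orthogonal :
  (forall v, R a v /\ in_cone i j v <-> v = alpha i \/ v = alpha j) ->
  C a i j = 0 /\ C a j i = 0.
Proof.
move=> cone; have cij_ge0 : 0 <= - C a i j by rewrite oppr_ge0 cartan_offdiag_le0.
have [/ffunP/(_ j)|/ffunP/(_ i)] : pair_vec i j (- C a i j) 1 = alpha i \/
                                   pair_vec i j (- C a i j) 1 = alpha j.
- apply/cone; split; first exact: root_reflect_alpha.
  by exists `|- C a i j|%N, 1%N; rewrite gez0_abs.
- by rewrite pair_vecEr // alpha_offdiag 1?eq_sym.
- rewrite pair_vecEl // alpha_offdiag // => /eqP; rewrite oppr_eq0 => /eqP cij.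
  by split; last exact: cartan_zero_sym.
Qed.

Lemma cone_roots_m_is2 :
  (forall v, R a v /\ in_cone i j v <-> v = alpha i \/ v = alpha j) ->
  m_is R a i j 2.
Proof.
move=> cone; exists [:: alpha i; alpha j]; split; first by rewrite /= inE alpha_eq ij.
split=> // v; rewrite cone !inE.
by split=> [/orP[]/eqP|[]->]; rewrite ?eqxx ?orbT; auto.
Qed.

Lemma m_is2_cone_roots (v : vecZ I) :
  m_is R a i j 2 -> R a v /\ in_cone i j v <-> v = alpha i \/ v = alpha j.
Proof.
move=> [s [_ [mem_s size_s]]]; split=> [/mem_s|]; last exact: alpha_cone_roots.
by apply: mem_size2 size_s _ _ _; rewrite ?alpha_eq //; apply/mem_s/alpha_cone_roots; auto.
Qed.

End RankTwoCone.

Theorem lemma4p4 (I : finType) (A : Type) (rho : I -> A -> A)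
  (C : A -> I -> I -> int) (R : A -> vecZ I -> Prop) :
  cartan_scheme rho C -> connected_scheme rho -> root_system rho C R ->
  forall (a : A) (i j : I), i != j ->
    [<-> (C a i j = 0 /\ C a j i = 0);
         (forall v, (R a v /\ in_cone i j v) <-> (v = alpha i \/ v = alpha j));
         m_is R a i j 2].
Proof.
move=> hC _ hR a i j ij; tfae.
- by move=> [cij _] v; exact: (orthogonal_cone_roots hC hR ij v cij).
- exact: cone_roots_m_is2.
- move=> m2; apply: (cone_roots_alpha_orthogonal hC hR ij) => v.
  exact: (m_is2_cone_roots hR ij v m2).
Qed.
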